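(* Let $A_0,A_1,A_2\in\mathbb{R}[x]$ with $A_2\not\equiv0$, let $I$ be an open interval on which $A_2$ has no zeros, and let $g_0,g_1\in\mathbb{R}[x,y]$ with $g_1\not\equiv0$ and $\partial_y(g_0/g_1)\not\equiv0$. Consider the polynomial vector field $\mathcal{X}=P\,\partial_x+Q\,\partial_y$ with $$P=A_2(x)\left(g_0\,\partial_y g_1-g_1\,\partial_y g_0\right),\qquad Q=A_0(x)g_1^2+A_1(x)g_1g_0+A_2(x)g_0^2+A_2(x)\left(g_1\,\partial_x g_0-g_0\,\partial_x g_1\right).$$ Let $w\in C^2(I)$ be any nonzero solution of $A_2w''+A_1w'+A_0w=0$ on $I$, and put $f(x,y)=g_1(x,y)\,w'(x)-g_0(x,y)\,w(x)$ on $I\times\mathbb{R}$. Then $f$ is an invariant of $\mathcal{X}$ with the polynomial cofactor $$k=\left(A_0\,\partial_y g_1+A_1\,\partial_y g_0\right)g_1+A_2\,g_0\,\partial_y g_0+A_2\left(\partial_y g_1\,\partial_x g_0-\partial_y g_0\,\partial_x g_1\right),$$ i.e. $P\,\partial_x f+Q\,\partial_y f=k\,f$ on $I\times\mathbb{R}$.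
   Context: A $C^1$ function $f$ on an open set $U\subset\mathbb{R}^2$ is called an invariant of a vector field $\mathcal{X}=P\partial_x+Q\partial_y$ with cofactor $k$ if $P\,\partial_x f+Q\,\partial_y f=k f$ on $U$. *)

From HB Require Import structures.
From mathcomp Require Import all_boot all_order all_algebra.
From mathcomp Require Import all_classical all_reals all_analysis.
Set Implicit Arguments. Unset Strict Implicit. Unset Printing Implicit Defensive.
Import Order.TTheory GRing.Theory Num.Theory.
Import numFieldNormedType.Exports.
Local Open Scope classical_set_scope.
Local Open Scope ring_scope.

(* Bivariate polynomials R[x,y] are represented as {poly {poly R}}:
   the coefficients are polynomials in x, the outer variable is y. *)
Definition peval2 {R : realType} (p : {poly {poly R}}) (x y : R) : R :=
  (p.[y%:P]).[x].

Definition dxp {R : realType} (p : {poly {poly R}}) : {poly {poly R}} :=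
  map_poly (@deriv R) p.
Definition dyp {R : realType} (p : {poly {poly R}}) : {poly {poly R}} :=
  deriv p.

Definition pdx {R : realType} (f : R -> R -> R) (x y : R) : R :=
  derive1 (fun t => f t y) x.
Definition pdy {R : realType} (f : R -> R -> R) (x y : R) : R :=
  derive1 (f x) y.

Definition C1_on {R : realType} (U : set (R * R)) (f : R -> R -> R) : Prop :=
  forall p : R * R, U p ->
    [/\ derivable (fun t => f t p.2) p.1 1,
        derivable (f p.1) p.2 1,
        {for p, continuous (fun q : R * R => pdx f q.1 q.2)} &
        {for p, continuous (fun q : R * R => pdy f q.1 q.2)}].

Definition is_invariant {R : realType} (U : set (R * R))
  (P Q k : R -> R -> R) (f : R -> R -> R) : Prop :=
  open U /\ C1_on U f /\
  forall p : R * R, U p ->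
    P p.1 p.2 * pdx f p.1 p.2 + Q p.1 p.2 * pdy f p.1 p.2 = k p.1 p.2 * f p.1 p.2.

Definition open_itv {R : realType} (a b : \bar R) : set R :=
  [set x : R | (a < x%:E)%E /\ (x%:E < b)%E].

Section Field.
Context {R : realType} (A0 A1 A2 : {poly R}) (g0 g1 : {poly {poly R}}).
Definition liftx (A : {poly R}) : {poly {poly R}} := A%:P.
Definition vfield_P : {poly {poly R}} :=
  liftx A2 * (g0 * dyp g1 - g1 * dyp g0).
Definition vfield_Q : {poly {poly R}} :=
  liftx A0 * g1 ^+ 2 + liftx A1 * g1 * g0 + liftx A2 * g0 ^+ 2
  + liftx A2 * (g1 * dxp g0 - g0 * dxp g1).
Definition vfield_cofactor : {poly {poly R}} :=
  (liftx A0 * dyp g1 + liftx A1 * dyp g0) * g1 + liftx A2 * g0 * dyp g0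
  + liftx A2 * (dyp g1 * dxp g0 - dyp g0 * dxp g1).
End Field.

From HB Require Import structures.
From mathcomp Require Import all_boot all_order all_algebra.
From mathcomp Require Import all_classical all_reals all_analysis.
From mathcomp Require Import ring.
Import Order.TTheory GRing.Theory Num.Theory.
Import numFieldNormedType.Exports.
Local Open Scope classical_set_scope.
Local Open Scope ring_scope.

(* By the product rule, f = g1 w' - g0 w has partial derivatives
     f_x = g1_x w' + g1 w'' - g0_x w - g0 w'   and   f_y = g1_y w' - g0_y w,
   and a polynomial identity gives
     P f_x + Q f_y - k f = (g0 g1_y - g1 g0_y) g1 (A2 w'' + A1 w' + A0 w),
   which vanishes on I because w solves the ODE. *)

Lemma invariant_defect (R : comPzRingType)
    (A0 A1 A2 g0 g1 g0x g1x g0y g1y w0 w1 w2 : R) :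
  let P := A2 * (g0 * g1y - g1 * g0y) in
  let Q := A0 * g1 ^+ 2 + A1 * g1 * g0 + A2 * g0 ^+ 2
           + A2 * (g1 * g0x - g0 * g1x) in
  let k := (A0 * g1y + A1 * g0y) * g1 + A2 * g0 * g0y
           + A2 * (g1y * g0x - g0y * g1x) in
  P * (g1x * w1 + g1 * w2 - (g0x * w0 + g0 * w1)) + Q * (g1y * w1 - g0y * w0)
    - k * (g1 * w1 - g0 * w0)
  = (g0 * g1y - g1 * g0y) * g1 * (A2 * w2 + A1 * w1 + A0 * w0).
Proof. by rewrite /=; ring. Qed.

Section BivariatePolynomialCalculus.
Context {R : realType}.
Implicit Types (p : {poly {poly R}}) (x y : R).

Lemma peval2E p x y : peval2 p x y = (map_poly (horner_eval x) p).[y].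
Proof.
rewrite /peval2 -[y in RHS](hornerC y x) -/(horner_eval x y%:P).
by rewrite horner_map.
Qed.

Lemma deriv_horner_dxp p y : (p.[y%:P])^`() = (dxp p).[y%:P].
Proof.
have size_dxp : (size (dxp p) <= size p)%N by exact: size_poly.
rewrite (horner_coef_wide _ size_dxp) horner_coef raddf_sum /=.
apply: eq_bigr => i _.
rewrite /dxp coef_map_id0 ?deriv0 // -rmorphXn mulrC mul_polyC derivZ.
by rewrite mulrC mul_polyC.
Qed.

Lemma is_derive_peval2x p x y :
  is_derive x 1 (fun t => peval2 p t y) (peval2 (dxp p) x y).
Proof. by rewrite /peval2 -deriv_horner_dxp; exact: is_derive_poly. Qed.

Lemma is_derive_peval2y p x y :
  is_derive y 1 (peval2 p x) (peval2 (dyp p) x y).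
Proof.
have -> : peval2 p x = horner (map_poly (horner_eval x) p).
  by apply/funext => z; rewrite peval2E.
by rewrite peval2E /dyp -deriv_map; exact: is_derive_poly.
Qed.

Lemma continuous_peval2 p : continuous (fun z : R * R => peval2 p z.1 z.2).
Proof.
elim/poly_ind: p => [|p c IHp] z.
  under eq_fun do rewrite /peval2 !horner0.
  exact: cst_continuous.
under eq_fun do rewrite /peval2 !hornerE.
apply: cvgD; first apply: cvgM; [exact: IHp | exact: cvg_snd |].
apply: (@continuous_comp _ _ _ fst (horner c)); first exact: cvg_fst.
exact: continuous_horner.
Qed.

Lemma continuous_peval2_mul_fst p (h : R -> R) (z : R * R) :
  {for z.1, continuous h} ->
  {for z, continuous (fun q : R * R => peval2 p q.1 q.2 * h q.1)}.
Proof.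
move=> hz; apply: cvgM; first exact: continuous_peval2.
by apply: (@continuous_comp _ _ _ fst h); first exact: cvg_fst.
Qed.

End BivariatePolynomialCalculus.

Lemma near_eq_continuous (T U : topologicalType) (f g : T -> U) (z : T) :
  (\forall q \near z, g q = f q) -> {for z, continuous g} ->
  {for z, continuous f}.
Proof.
move=> gf gz; have gzfz : g z = f z by exact: nbhs_singleton gf.
by apply: cvg_trans (near_eq_cvg gf) _; rewrite -gzfz.
Qed.

Lemma open_fst_preimage (T U : topologicalType) (A : set T) :
  open A -> open [set p : T * U | A p.1].
Proof. by move=> oA; apply: (@open_comp _ _ fst) => // q _; exact: cvg_fst. Qed.

Section LinearForm.
Variables (R : realType) (g0 g1 : {poly {poly R}}) (w : R -> R).

Local Notation f := (fun x y => peval2 g1 x y * derive1 w x - peval2 g0 x y * w x).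

Local Notation fx x y := (
  peval2 (dxp g1) x y * derive1 w x + peval2 g1 x y * derive1 (derive1 w) x
  - (peval2 (dxp g0) x y * w x + peval2 g0 x y * derive1 w x)).

Local Notation fy x y := (
  peval2 (dyp g1) x y * derive1 w x - peval2 (dyp g0) x y * w x).

Lemma is_derive_linear_formx (x y : R) : derivable w x 1 -> derivable (derive1 w) x 1 ->
  is_derive x 1 (fun t => f t y) (fx x y).
Proof.
move=> w1 w2.
have := is_deriveB (is_deriveM (is_derive_peval2x g1 x y) (derivableP w2))
                   (is_deriveM (is_derive_peval2x g0 x y) (derivableP w1)).
move/trigger_derive; apply.
by rewrite -!derive1E /GRing.scale /=; ring.
Qed.

Lemma is_derive_linear_formy (x y : R) : is_derive y 1 (f x) (fy x y).
Proof.
have := is_deriveB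
  (is_deriveM (is_derive_peval2y g1 x y) (is_derive_cst (derive1 w x) y 1))
  (is_deriveM (is_derive_peval2y g0 x y) (is_derive_cst (w x) y 1)).
move/trigger_derive; apply.
by rewrite !scaler0 !add0r /GRing.scale /=; ring.
Qed.

Lemma pdx_linear_form (x y : R) : derivable w x 1 -> derivable (derive1 w) x 1 ->
  pdx f x y = fx x y.
Proof.
move=> w1 w2; rewrite /pdx derive1E.
exact: (@derive_val _ _ _ _ _ _ _ (is_derive_linear_formx x y w1 w2)).
Qed.

Lemma pdy_linear_form (x y : R) : pdy f x y = fy x y.
Proof. by rewrite /pdy derive1E (@derive_val _ _ _ _ _ _ _ (is_derive_linear_formy x y)). Qed.

Lemma C1_on_linear_form (I : set R) : open I ->
  (forall x, I x -> [/\ derivable w x 1, derivable (derive1 w) x 1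
                      & {for x, continuous (derive1 (derive1 w))}]) ->
  C1_on [set p : R * R | I p.1] f.
Proof.
move=> open_I w_C2 z Iz; have [w1 w2 w3] := w_C2 z.1 Iz.
have near_I : \forall q \near z, I q.1.
  by apply: open_nbhs_nbhs; split; first exact: open_fst_preimage.
have cw0 : {for z.1, continuous w} by apply/differentiable_continuous/derivable1_diffP.
have cw1 : {for z.1, continuous (derive1 w)}.
  by apply/differentiable_continuous/derivable1_diffP.
split.
- exact: (@ex_derive _ _ _ _ _ _ _ (is_derive_linear_formx z.1 z.2 w1 w2)).
- exact: (@ex_derive _ _ _ _ _ _ _ (is_derive_linear_formy z.1 z.2)).
- apply: (@near_eq_continuous _ _ _ (fun q : R * R => fx q.1 q.2)).
    apply: filterS near_I => q Iq; have [v1 v2 _] := w_C2 q.1 Iq.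
    by rewrite pdx_linear_form.
  by apply: cvgB; apply: cvgD; apply: continuous_peval2_mul_fst.
- apply: (@near_eq_continuous _ _ _ (fun q : R * R => fy q.1 q.2)).
    by apply: filterS near_I => q _; rewrite pdy_linear_form.
  by apply: cvgB; apply: continuous_peval2_mul_fst.
Qed.

End LinearForm.

Theorem mainTheorem2 (R : realType) (A0 A1 A2 : {poly R})
  (g0 g1 : {poly {poly R}}) (a b : \bar R) (w : R -> R) :
  A2 != 0 ->
  (a < b)%E ->
  (forall x, open_itv a b x -> A2.[x] != 0) ->
  g1 != 0 ->
  (* d/dy (g0/g1) is not identically zero, i.e. its numerator
     g1 * dy g0 - g0 * dy g1 is a nonzero polynomial *)
  g1 * dyp g0 - g0 * dyp g1 != 0 ->
  (* w is C^2 on I *)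
  (forall x, open_itv a b x ->
     [/\ derivable w x 1, derivable (derive1 w) x 1 & {for x, continuous (derive1 (derive1 w))}]) ->
  (* w is a nonzero solution of A2 w'' + A1 w' + A0 w = 0 on I *)
  (exists x, open_itv a b x /\ w x != 0) ->
  (forall x, open_itv a b x ->
     A2.[x] * (derive1 (derive1 w)) x + A1.[x] * (derive1 w) x + A0.[x] * w x = 0) ->
  is_invariant [set p : R * R | open_itv a b p.1]
    (peval2 (vfield_P A2 g0 g1)) (peval2 (vfield_Q A0 A1 A2 g0 g1))
    (peval2 (vfield_cofactor A0 A1 A2 g0 g1))
    (fun x y => peval2 g1 x y * (derive1 w) x - peval2 g0 x y * w x).
Proof.
move=> _ _ _ _ _ w_C2 _ w_ode.
have open_I : open (open_itv a b).
  by apply: openI; [exact: open_ereal_gt | exact: open_ereal_lt].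
split; first exact: open_fst_preimage.
split; first exact: C1_on_linear_form.
move=> [x y] /= Ix; have [w1 w2 _] := w_C2 x Ix.
rewrite pdx_linear_form // pdy_linear_form; apply/eqP; rewrite -subr_eq0.
rewrite /vfield_P /vfield_Q /vfield_cofactor /liftx /peval2.
rewrite !(hornerD, hornerN, hornerM, hornerXn, hornerC).
by rewrite invariant_defect w_ode // mulr0.
Qed.
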